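(* For any graph $G$, $\Gamma(G)\le\Gamma(G\uparrow\mathcal{B})$.
   Context: Graphs are finite and simple. A Grundy-coloring of $G$ is a proper coloring with nonempty color classes $C_1,\ldots,C_k$ such that for $i<j$ each vertex of $C_j$ has a neighbor in $C_i$; $\Gamma(G)$ is the maximum number of colors of a Grundy-coloring. A block of $G$ is a maximal 2-connected subgraph or a bridge (as a $K_2$). $G\uparrow\mathcal{B}$ is the graph on $V(G)$ obtained from $G$ by adding an edge between every two non-adjacent vertices that belong to a same block of $G$ (so every block becomes a clique). *)

(* A finite simple graph on vertex type T : finType is an
   irreflexive symmetric relation e : rel T. *)
From mathcomp Require Import all_boot.
Set Implicit Arguments. Unset Strict Implicit. Unset Printing Implicit Defensive.

Section Graphs.
Variable T : finType.
Implicit Types (e : rel T) (S B : {set T}).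

Definition induced e S : rel T := [rel x y | [&& e x y, x \in S & y \in S]].

Definition connectedb e S : bool :=
  [forall x in S, forall y in S, connect (induced e S) x y].

Definition two_connected e S : bool :=
  [&& 2 < #|S|, connectedb e S & [forall x in S, connectedb e (S :\ x)]].

Definition del_edge e (u v : T) : rel T :=
  [rel x y | e x y && ~~ ((x == u) && (y == v) || (x == v) && (y == u))].

Definition bridge e (u v : T) : bool := e u v && ~~ connect (del_edge e u v) u v.

Definition is_block e B : bool :=
  (two_connected e B && [forall B' : {set T}, (B \proper B') ==> ~~ two_connected e B'])
  || [exists u, exists v, (B == [set u; v]) && bridge e u v].

Definition up_block e : rel T :=
  [rel x y | e x y || ((x != y) && [exists B : {set T}, [&& is_block e B, x \in B & y \in B]])].

(* Grundy colouring with k colours 1..k, as a map c : T -> 'I_(#|T|.+1)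
   (a Grundy colouring has nonempty classes, so k <= #|T|). Class C_i = c^-1(i). *)
Definition grundy_coloring e (k : nat) (c : {ffun T -> 'I_(#|T|.+1)}) : bool :=
  [&& [forall x, 0 < c x <= k],
      [forall i : 'I_(#|T|.+1), (0 < i <= k) ==> [exists x, c x == i]],
      [forall x, forall y, e x y ==> (c x != c y)] &
      [forall x, forall i : 'I_(#|T|.+1), (0 < i < c x) ==> [exists y, e x y && (c y == i)]]].

Definition grundy_number e : nat :=
  \max_(k < #|T|.+1 | [exists c, grundy_coloring e k c]) k.

End Graphs.

(* Let c be a Grundy colouring of G and v a vertex of top colour.  A partial
   Grundy colouring of G↑B in which v keeps its colour extends greedily to a
   Grundy colouring of G↑B, so it suffices to find a set S containing v on which
   c is proper in G↑B and in which every vertex sees all smaller colours along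
   edges of G↑B.  Start from the component of v and shrink: if x, y in S lie in
   a common block B and have the same colour, one of them, say x, is reachable
   from v avoiding y; keep only the vertices reachable from v in G - y.  A vertex
   z of the new S that used y as a witness can use x instead, because z lies in
   B: otherwise the component of G - B through z would attach to B at two
   distinct vertices, and adding an ear through it would enlarge the maximal
   2-connected subgraph B. *)

From mathcomp Require Import all_boot.
Set Implicit Arguments. Unset Strict Implicit. Unset Printing Implicit Defensive.

Section PartialGrundy.
Variables (T : finType) (r : rel T).
Hypotheses (r_sym : symmetric r) (r_irr : irreflexive r).

(* [f x = 0] means that [x] is uncoloured. *)
Definition partial_grundy (f : T -> nat) :=
  (forall x y, r x y -> 0 < f x -> f x != f y) /\
  (forall x i, 0 < i < f x -> exists2 y, r x y & f y = i).

Lemma grundy_coloring_partial k (c : {ffun T -> 'I_#|T|.+1}) :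
  grundy_coloring r k c -> partial_grundy (fun x => c x).
Proof.
case/and4P=> _ _ /forallP c_proper /forallP c_dom; split=> [x y rxy _ | x i lt_i].
  by move/forallP/(_ y)/implyP: (c_proper x) => /(_ rxy).
have lt_iT : i < #|T|.+1 by rewrite (ltn_trans _ (ltn_ord (c x))) ?(andP lt_i).2.
move/forallP/(_ (Ordinal lt_iT))/implyP: (c_dom x) => /(_ lt_i).
by case/existsP=> y /andP[rxy /eqP cy]; exists y; rewrite ?cy.
Qed.

Lemma grundy_number_partial :
  0 < grundy_number r -> exists c (v : T), partial_grundy c /\ c v = grundy_number r.
Proof.
rewrite /grundy_number.
case: (pickP (fun k : 'I_#|T|.+1 => [exists c, grundy_coloring r k c])) => [k0 Pk0 | none];
  last by rewrite big_pred0.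
rewrite (bigmax_eq_arg k0) //; case: arg_maxnP => // k /existsP[c ck] _ k_gt0.
case/and4P: (ck) => _ /forallP/(_ k) /implyP; rewrite k_gt0 leqnn => /(_ isT).
case/existsP=> v /eqP cv; exists (fun x => nat_of_ord (c x)), v.
by rewrite cv; split=> //; apply: grundy_coloring_partial ck.
Qed.

Lemma partial_grundy_le_card f x : partial_grundy f -> f x <= #|T|.
Proof.
case=> _ f_dom.
pose w (i : 'I_(f x)) := if i.+1 == f x then x else odflt x [pick y | f y == i.+1].
have f_w i : f (w i) = i.+1.
  rewrite /w; case: eqP => [-> // | ne_i]; case: pickP => [y /eqP // | none].
  have [y _ fy] : exists2 y, r x y & f y = i.+1.
    by apply: f_dom; rewrite /= ltn_neqAle (ltn_ord i) andbT; apply/eqP.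
  by move: (none y); rewrite fy eqxx.
rewrite -[f x]card_ord; apply: (leq_card w) => i j /(congr1 f); rewrite !f_w.
by move=> [] /val_inj.
Qed.

Lemma partial_grundy_color_vertex f u :
  partial_grundy f -> f u = 0 ->
  exists2 m, 0 < m & partial_grundy (fun x => if x == u then m else f x).
Proof.
case=> f_proper f_dom fu0.
pose free j := (0 < j) && [forall y, r u y ==> (f y != j)].
have ex_free : exists j, free j.
  exists (\max_y f y).+1; apply/forallP => y; apply/implyP => _.
  by rewrite neq_ltn ltnS leq_bigmax.
case: (ex_minnP ex_free) => m /andP[m_gt0 /forallP m_free] m_min; exists m => //.
have neq_u x : 0 < f x -> x != u by apply: contraTneq => ->; rewrite fu0.
have m_ne y : r u y -> f y != m by move/implyP: (m_free y).
split=> [x y | x i].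
  case: (eqVneq x u) => [-> | xu]; case: (eqVneq y u) => [-> | yu].
  - by rewrite r_irr.
  - by move=> ruy _; rewrite eq_sym m_ne.
  - by move=> rxu fx; rewrite m_ne // r_sym.
  - exact: f_proper.
case: (eqVneq x u) => [-> lt_im | xu lt_i].
  have : ~~ free i by apply/negP => /m_min; rewrite leqNgt (andP lt_im).2.
  rewrite /free (andP lt_im).1 negb_forall => /existsP[y]; rewrite negb_imply negbK.
  case/andP=> ruy /eqP fy; exists y => //=.
  by rewrite (negbTE (neq_u y _)) // fy (andP lt_im).1.
have [y rxy fy] := f_dom x i lt_i.
by exists y => //; rewrite /= (negbTE (neq_u y _)) // fy (andP lt_i).1.
Qed.

Lemma partial_grundy_extend f :
  partial_grundy f ->
  exists g, [/\ forall x, 0 < g x, partial_grundy g & forall x, 0 < f x -> g x = f x].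
Proof.
have [n] := ubnP #|[set x | f x == 0]|; elim: n f => // n IHn f lt_zeros_n pf.
case: (pickP [pred x | f x == 0]) => [u /eqP fu0 | no_zero]; last first.
  exists f; split=> // x; rewrite lt0n; apply/negP => /eqP fx0.
  by move: (no_zero x); rewrite /= fx0.
have [m m_gt0 pf'] := partial_grundy_color_vertex pf fu0.
set f' := fun x => _ in pf'.
have lt_zeros : #|[set x | f' x == 0]| < n.
  rewrite -ltnS (leq_trans _ lt_zeros_n) // ltnS; apply: proper_card; apply/properP; split.
    by apply/subsetP => x; rewrite !inE /f'; case: (eqVneq x u) => [-> | //]; rewrite fu0.
  by exists u; rewrite !inE /f' ?fu0 // eqxx -lt0n.
have [g [g_gt0 pg g_f']] := IHn f' lt_zeros pf'.
exists g; split=> // x fx_gt0; rewrite g_f' /f'; last by case: eqP.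
by case: eqP fx_gt0 => [-> | //]; rewrite fu0.
Qed.

Lemma grundy_number_ge_max g x0 :
  (forall x, 0 < g x) -> partial_grundy g -> (forall x, g x <= g x0) ->
  g x0 <= grundy_number r.
Proof.
move=> g_gt0 pg g_max; have [g_proper g_dom] := pg.
have g_small x : g x < #|T|.+1 by rewrite ltnS (partial_grundy_le_card x pg).
pose c := [ffun x => inord (g x) : 'I_#|T|.+1].
have cE x : c x = g x :> nat by rewrite ffunE inordK.
have c_grundy : grundy_coloring r (g x0) c.
  apply/and4P; split.
  - by apply/forallP => x; rewrite cE g_gt0 g_max.
  - apply/forallP => i; apply/implyP => /andP[i_gt0].
    rewrite leq_eqVlt => /orP[/eqP ieq | lt_i].
      by apply/existsP; exists x0; rewrite -(inj_eq val_inj) /= cE ieq.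
    have [y _ gy] := g_dom x0 i (introT andP (conj i_gt0 lt_i)).
    by apply/existsP; exists y; rewrite -(inj_eq val_inj) /= cE gy.
  - do 2![apply/forallP => ?]; apply/implyP => rxy.
    by rewrite -(inj_eq val_inj) /= !cE g_proper.
  - apply/forallP => x; apply/forallP => i; apply/implyP; rewrite cE => /g_dom[y rxy gy].
    by apply/existsP; exists y; rewrite rxy -(inj_eq val_inj) /= cE gy.
have := @leq_bigmax_cond _ (fun k : 'I_#|T|.+1 => [exists c, grundy_coloring r k c])
  (fun k => nat_of_ord k) (inord (g x0)).
by rewrite inordK //; apply; apply/existsP; exists c.
Qed.

Lemma partial_grundy_le_grundy_number f x : partial_grundy f -> f x <= grundy_number r.
Proof.
case/partial_grundy_extend=> g [g_gt0 pg g_f].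
have [x0 _ g_max] := @arg_maxnP T x xpredT g isT.
case: (posnP (f x)) => [-> // | fx_gt0].
rewrite -g_f // (leq_trans (g_max x isT)) //.
by apply: grundy_number_ge_max => // y; apply: g_max.
Qed.

End PartialGrundy.

Section InducedConnectivity.
Variables (T : finType) (e : rel T).
Hypothesis e_sym : symmetric e.
Implicit Types (S A B : {set T}).

Lemma connect_ind (r : rel T) (P : T -> Prop) x :
  P x -> (forall a b, P a -> r a b -> P b) -> forall y, connect r x y -> P y.
Proof.
move=> Px P_step y /connectP[p].
elim: p x Px => [x Px _ -> // | a p IHp x Px /= /andP[rxa pa]].
exact: IHp (P_step _ _ Px rxa) pa.
Qed.

Lemma connect_induced_sym S : connect_sym (induced e S).
Proof.
apply: sym_connect_sym => x y.
by rewrite /induced /= e_sym; do 2!case: (_ \in S); rewrite ?andbF.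
Qed.

Lemma connect_induced_in S a b : connect (induced e S) a b -> a \in S -> b \in S.
Proof.
move=> Cab aS.
by apply: (connect_ind (P := fun t => t \in S)) aS _ b Cab => ? ? _ /and3P[].
Qed.

Lemma sub_connect_induced S1 S2 a b :
  S1 \subset S2 -> connect (induced e S1) a b -> connect (induced e S2) a b.
Proof.
move=> /subsetP sS12; apply: connect_sub => x y /and3P[exy xS yS].
by apply: connect1; rewrite /induced /= exy !sS12.
Qed.

Lemma connect_induced1 S a b : e a b -> a \in S -> b \in S -> connect (induced e S) a b.
Proof. by move=> eab aS bS; apply: connect1; rewrite /induced /= eab aS bS. Qed.

Lemma connect_induced_rcons S a b c :
  connect (induced e S) a b -> e b c -> b \in S -> c \in S -> connect (induced e S) a c.
Proof. by move=> Cab ebc bS cS; apply: connect_trans Cab (connect_induced1 ebc bS cS). Qed.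

Lemma connectedb_from S a : (forall b, b \in S -> connect (induced e S) a b) -> connectedb e S.
Proof.
move=> Ca; apply/forall_inP => x xS; apply/forall_inP => y yS.
by apply: connect_trans (Ca y yS); rewrite connect_induced_sym Ca.
Qed.

Lemma connectedbP S a b : connectedb e S -> a \in S -> b \in S -> connect (induced e S) a b.
Proof. by move=> /forall_inP/(_ a) S_conn aS; move/forall_inP: (S_conn aS); apply. Qed.

Lemma connectedbU S1 S2 a b :
  connectedb e S1 -> connectedb e S2 -> a \in S1 -> b \in S2 -> e a b ->
  connectedb e (S1 :|: S2).
Proof.
move=> S1_conn S2_conn aS1 bS2 eab; apply: (connectedb_from (a := a)) => w.
have [sS1 sS2] : S1 \subset S1 :|: S2 /\ S2 \subset S1 :|: S2 by rewrite subsetUl subsetUr.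
case/setUP=> [wS1 | wS2]; first by apply: sub_connect_induced sS1 (connectedbP S1_conn aS1 wS1).
apply: connect_trans (sub_connect_induced sS2 (connectedbP S2_conn bS2 wS2)).
by apply: connect_induced1; rewrite // inE ?aS1 ?bS2 ?orbT.
Qed.

Lemma connectedb_component A z : connectedb e [set b | connect (induced e A) z b].
Proof.
set C := [set b | _]; apply: (connectedb_from (a := z)) => w; rewrite inE => Czw.
apply: (connect_ind (P := connect (induced e C) z)) (connect0 _ z) _ w Czw.
move=> a b Cza /and3P[eab aA bA].
have Cza' : connect (induced e A) z a.
  by have := connect_induced_in Cza; rewrite !inE connect0; apply.
have bC : b \in C by rewrite inE (connect_induced_rcons Cza' eab aA bA).
by apply: connect_induced_rcons Cza eab _ bC; rewrite inE.
Qed.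

Lemma connect_first_entry S B z t :
  z \notin B -> t \in B -> connect (induced e S) z t ->
  exists k b, [/\ connect (induced e (~: B)) z k, b \in B, b \in S & e k b].
Proof.
move=> zB tB Czt.
pose P s := connect (induced e (~: B)) z s \/
  exists k b, [/\ connect (induced e (~: B)) z k, b \in B, b \in S & e k b].
have : P t.
  apply: (connect_ind (P := P) (or_introl (connect0 _ z)) _ Czt).
  move=> a b [Cza | ?] /and3P[eab aS bS]; last by right.
  case bB: (b \in B); first by right; exists a, b.
  have aB : a \in ~: B by apply: connect_induced_in Cza _; rewrite inE.
  by left; apply: connect_induced_rcons Cza eab aB _; rewrite inE bB.
by case=> // /connect_induced_in; rewrite !inE tB => /(_ zB).
Qed.

Lemma connect_avoid_either v x y :
  x != y -> connect e v x ->
  (y != v /\ connect (induced e (~: [set y])) v x) \/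
  (x != v /\ connect (induced e (~: [set x])) v y).
Proof.
move=> xy Cvx; case: (eqVneq v x) xy => [-> xy | vx xy]; first by left; split; rewrite // eq_sym.
case: (eqVneq v y) xy => [-> xy | vy xy]; first by right.
have Cvx' : connect (induced e setT) v x.
  by rewrite (@eq_connect _ _ e) // => a b; rewrite /induced /= !in_setT !andbT.
have vxy : v \in ~: [set x; y] by rewrite !inE negb_or vx vy.
have vxy' : v \notin [set x; y] by rewrite -in_setC.
have [k [b [Cvk bxy _ ekb]]] := connect_first_entry vxy' (set21 x y) Cvx'.
have := connect_induced_in Cvk vxy; rewrite !inE negb_or => /andP[kx ky].
have sub_xy a : a \in [set x; y] -> ~: [set x; y] \subset ~: [set a].
  by move=> axy; rewrite setCS sub1set.
case/set2P: bxy ekb => -> ekb; [left | right]; split=> //.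
  have Cvk' := sub_connect_induced (sub_xy _ (set22 x y)) Cvk.
  by apply: connect_induced_rcons Cvk' ekb _ _; rewrite !inE.
have Cvk' := sub_connect_induced (sub_xy _ (set21 x y)) Cvk.
by apply: connect_induced_rcons Cvk' ekb _ _; rewrite !inE // eq_sym.
Qed.

End InducedConnectivity.

Section Blocks.
Variables (T : finType) (e : rel T).
Hypotheses (e_sym : symmetric e) (e_irr : irreflexive e).
Implicit Types (B K : {set T}).

Definition max_two_connected B :=
  two_connected e B /\ forall B', B \proper B' -> ~~ two_connected e B'.

Lemma is_blockP B :
  is_block e B -> max_two_connected B \/ exists p q, B = [set p; q] /\ e p q.
Proof.
case/orP=> [/andP[B2 /forallP B_max] | /existsP[p /existsP[q /andP[/eqP-> /andP[epq _]]]]].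
  by left; split=> // B' /(implyP (B_max B')).
by right; exists p, q.
Qed.

Lemma set2_edge p q x y : e p q -> x \in [set p; q] -> y \in [set p; q] -> x != y -> e x y.
Proof. by move=> epq /set2P[]-> /set2P[]->; rewrite ?eqxx // e_sym. Qed.

Lemma two_connected_setD1 B a : two_connected e B -> connectedb e (B :\ a).
Proof.
case/and3P=> _ B_conn /forall_inP B_cut; case: (boolP (a \in B)) => [/B_cut // | aB].
by rewrite (setDidPl _) // disjoint_sym disjoints1.
Qed.

Lemma up_blockW x y : e x y -> up_block e x y.
Proof. by rewrite /up_block /= => ->. Qed.

Lemma up_block_irr : irreflexive (up_block e).
Proof. by move=> x; rewrite /up_block /= e_irr eqxx. Qed.

Lemma up_block_sym : symmetric (up_block e).
Proof.
move=> x y; rewrite /up_block /= e_sym eq_sym; congr (_ || (_ && _)).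
by apply/existsP/existsP=> -[B /and3P[? ? ?]]; exists B; apply/and3P.
Qed.

Lemma up_block_of_block B x y :
  is_block e B -> x \in B -> y \in B -> x != y -> up_block e x y.
Proof.
move=> bB xB yB xy; rewrite /up_block /= xy; apply/orP; right.
by apply/existsP; exists B; rewrite bB xB yB.
Qed.

Lemma up_block_cases x y :
  up_block e x y ->
  e x y \/ exists2 B, is_block e B /\ max_two_connected B & x \in B /\ y \in B.
Proof.
case/orP=> [| /andP[xy /existsP[B /and3P[bB xB yB]]]]; first by left.
case: (is_blockP bB) => [B_max | [p [q [Bpq epq]]]]; first by right; exists B.
by left; rewrite Bpq in xB yB; apply: set2_edge epq xB yB xy.
Qed.

Lemma up_block_connect_setD1 y z w :
  up_block e z w -> z != y -> w != y -> connect (induced e (~: [set y])) z w.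
Proof.
move=> /up_block_cases[ezw | [B [_ [B2 _]] [zB wB]]] zy wy.
  by apply: connect_induced1; rewrite // !inE.
apply: (sub_connect_induced (S1 := B :\ y)); first by rewrite setDE subsetIr.
by apply: (connectedbP (two_connected_setD1 y B2)); rewrite !inE ?zy ?wy.
Qed.

Section Ear.
Variables (B K : {set T}) (a1 a2 k1 k2 : T).
Hypotheses (B2 : two_connected e B) (KB : K \subset ~: B) (K_conn : connectedb e K).
Hypotheses (a12 : a1 != a2) (a1B : a1 \in B) (a2B : a2 \in B).
Hypotheses (k1K : k1 \in K) (k2K : k2 \in K) (ek1 : e k1 a1) (ek2 : e k2 a2).

Let KnB t : t \in K -> t \notin B.
Proof. by move/(subsetP KB); rewrite inE. Qed.

Lemma ear_setU_two_connected :
  (forall u, u \in K -> connectedb e ((B :|: K) :\ u)) -> two_connected e (B :|: K).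
Proof.
move=> K_noncut; have /and3P[B_gt2 B_conn /forall_inP B_cut] := B2.
apply/and3P; split.
- by rewrite (leq_trans B_gt2) // subset_leq_card // subsetUl.
- by apply: (connectedbU e_sym B_conn K_conn a1B k1K); rewrite e_sym.
apply/forall_inP => u /setUP[uB | /K_noncut //].
have [aj [kj [ajB aju kjK ekj]]] : exists aj kj, [/\ aj \in B, aj != u, kj \in K & e aj kj].
  case: (eqVneq a1 u) => [a1u | a1u]; last by exists a1, k1; rewrite e_sym.
  by exists a2, k2; rewrite -a1u eq_sym e_sym.
have uK : u \notin K by apply: contraL uB => /KnB.
rewrite setDUl [K :\ u](setDidPl _) 1?disjoint_sym ?disjoints1 //.
by apply: (connectedbU e_sym (B_cut u uB) K_conn _ kjK ekj); rewrite !inE aju.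
Qed.

Lemma ear_shrink u w :
  u \in K -> w \in (B :|: K) :\ u -> ~~ connect (induced e ((B :|: K) :\ u)) a1 w ->
  exists K2, [/\ K2 \subset K, #|K2| < #|K|, connectedb e K2, k1 \in K2 & k2 \in K2].
Proof.
set U := (B :|: K) :\ u => uK wU a1w.
have BU : B \subset U.
  by apply/subsetP => t tB; rewrite !inE tB andbT; apply: contraTneq tB => ->; apply: KnB.
set C := [set t | connect (induced e U) w t].
have CU t : t \in C -> t \in U by rewrite inE => /connect_induced_in; apply.
have C_closed t s : t \in C -> e t s -> s \in U -> s \in C.
  by move=> tC ets sU; rewrite inE (connect_induced_rcons _ ets (CU t tC) sU) // -inE.
have CnB t : t \in C -> t \notin B.
  move=> tC; apply: contra a1w => tB; rewrite (connect_induced_sym e_sym).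
  apply: connect_trans (_ : connect _ w t) _.
    by rewrite -inE.
  by apply: (sub_connect_induced BU); apply: connectedbP tB a1B; case/and3P: B2.
have KnC t a : a \in B -> e t a -> t \notin C.
  by move=> aB eta; apply/negP => /C_closed/(_ eta (subsetP BU a aB))/CnB; rewrite aB.
have k1K2 : k1 \in K :\: C by rewrite inE k1K andbT (KnC _ _ a1B ek1).
have k2K2 : k2 \in K :\: C by rewrite inE k2K andbT (KnC _ _ a2B ek2).
have uK2 : u \in K :\: C by rewrite inE uK andbT; apply/negP => /CU; rewrite !inE eqxx.
have wC : w \in C by rewrite inE connect0.
have wK : w \in K by case/setD1P: wU => _ /setUP[wB | //]; move: (CnB w wC); rewrite wB.
exists (K :\: C); split=> //; first exact: subsetDl.
  apply: proper_card; apply/properP; split; first exact: subsetDl.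
  by exists w; rewrite // inE wC.
apply: (connectedb_from e_sym (a := u)) => t tK2; rewrite (connect_induced_sym e_sym).
have [tK t_nC] : t \in K /\ t \notin C by move: tK2; rewrite inE => /andP[].
pose P s := connect (induced e (K :\: C)) t s \/ connect (induced e (K :\: C)) t u.
suff [] : P u by [].
apply: (connect_ind (P := P) (or_introl (connect0 _ t)) _ (connectedbP K_conn tK uK)).
move=> s s' [Cts | ?] /and3P[ess' sK s'K]; last by right.
case: (eqVneq s u) Cts => [-> Ctu | su Cts]; first by right.
have sK2 := connect_induced_in Cts tK2.
have s'C : s' \notin C.
  apply/negP => s'C; have sC : s \in C.
    by apply: C_closed s'C _ _; rewrite 1?e_sym // !inE su sK orbT.
  by move: sK2; rewrite inE sC.
by left; apply: connect_induced_rcons Cts ess' sK2 _; rewrite inE s'C s'K.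
Qed.

End Ear.

Lemma two_connected_ear B K a1 a2 k1 k2 :
  two_connected e B -> K \subset ~: B -> connectedb e K ->
  a1 != a2 -> a1 \in B -> a2 \in B -> k1 \in K -> k2 \in K -> e k1 a1 -> e k2 a2 ->
  exists2 B' : {set T}, B \proper B' & two_connected e B'.
Proof.
move=> B2 KB K_conn a12 a1B a2B k1K k2K ek1 ek2.
have [n] := ubnP #|K|; elim: n K KB K_conn k1K k2K => // n IHn K KB K_conn k1K k2K K_lt.
(* Otherwise some u in K cuts a part of K off from B: drop that part and recurse. *)
case: (boolP [forall u in K, connectedb e ((B :|: K) :\ u)]) => [/forall_inP K_noncut | ].
  exists (B :|: K).
    apply/properP; split; first exact: subsetUl.
    by exists k1; rewrite ?inE ?k1K ?orbT //; move/(subsetP KB): k1K; rewrite inE.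
  exact: ear_setU_two_connected B2 KB K_conn a12 a1B a2B k1K k2K ek1 ek2 K_noncut.
rewrite negb_forall_in => /existsP[u /andP[uK U_disc]].
have [w wU a1w] :
    exists2 w, w \in (B :|: K) :\ u & ~~ connect (induced e ((B :|: K) :\ u)) a1 w.
  apply/exists_inP; rewrite -negb_forall_in; apply: contra U_disc => /forall_inP.
  exact: (connectedb_from e_sym).
have [K2 [K2K K2_lt K2_conn k1K2 k2K2]] :=
  ear_shrink B2 KB K_conn a1B a2B k1K k2K ek1 ek2 uK wU a1w.
apply: (IHn K2) => //; first exact: subset_trans K2K KB.
by rewrite -ltnS (leq_trans _ K_lt).
Qed.

Lemma max_two_connected_attach B K a1 a2 k1 k2 :
  max_two_connected B -> K \subset ~: B -> connectedb e K ->
  a1 \in B -> a2 \in B -> k1 \in K -> k2 \in K -> e k1 a1 -> e k2 a2 -> a1 = a2.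
Proof.
case=> B2 B_max KB K_conn a1B a2B k1K k2K ek1 ek2; apply/eqP; apply: contraT => a12.
have [B' /B_max] := two_connected_ear B2 KB K_conn a12 a1B a2B k1K k2K ek1 ek2.
by move/negP.
Qed.

Lemma up_block_replace B x y z :
  is_block e B -> max_two_connected B -> x \in B -> y \in B ->
  connect (induced e (~: [set y])) z x -> up_block e z y -> z != x -> up_block e z x.
Proof.
move=> bB B_max xB yB Czx Hzy zx.
have [zB | zB] := boolP (z \in B); first exact: up_block_of_block bB zB xB zx.
(* Otherwise the component of G - B through z meets B at some a1 != y on the way
   to x, and at another vertex on the way to y, contradicting maximality. *)
have [k1 [a1 [Czk1 a1B a1y ek1]]] := connect_first_entry zB xB Czx.
have [k2 [a2 [Czk2 a2B a2a1 ek2]]] :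
    exists k b, [/\ connect (induced e (~: B)) z k, b \in B, b != a1 & e k b].
  case/up_block_cases: Hzy => [ezy | [B' [_ [B'2 _]] [zB' yB']]].
    by exists z, y; split; rewrite ?connect0 // eq_sym; move: a1y; rewrite !inE.
  have za1 : z != a1 by apply: contraNneq zB => ->.
  have ya1 : y != a1 by move: a1y; rewrite !inE eq_sym.
  have Czy : connect (induced e (B' :\ a1)) z y.
    by apply: (connectedbP (two_connected_setD1 a1 B'2)); rewrite !inE ?za1 ?ya1.
  have [k [b [Czk bB2 bB' ekb]]] := connect_first_entry zB yB Czy.
  by exists k, b; split=> //; move: bB'; rewrite !inE => /andP[].
set K := [set k | connect (induced e (~: B)) z k].
have KB : K \subset ~: B.
  by apply/subsetP => t; rewrite inE => /connect_induced_in; apply; rewrite inE.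
have K_conn : connectedb e K := connectedb_component e_sym (~: B) z.
have k1K : k1 \in K by rewrite inE.
have k2K : k2 \in K by rewrite inE.
have a12 := max_two_connected_attach B_max KB K_conn a1B a2B k1K k2K ek1 ek2.
by rewrite a12 eqxx in a2a1.
Qed.

End Blocks.

Section Reduction.
Variables (T : finType) (e : rel T) (c : T -> nat) (v : T).
Hypotheses (e_sym : symmetric e) (e_irr : irreflexive e) (c_grundy : partial_grundy e c).

Local Notation H := (up_block e).

(* Staying inside the component of [v] guarantees that of two vertices of [S]
   one is reachable from [v] avoiding the other. *)
Definition witness_closed (S : {set T}) :=
  [/\ v \in S, forall x, x \in S -> connect e v x &
      forall x i, x \in S -> 0 < i < c x -> exists2 y, y \in S & H x y /\ c y = i].

Definition up_block_proper_on (S : {set T}) :=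
  forall x y, x \in S -> y \in S -> H x y -> 0 < c x -> c x != c y.

Lemma witness_closed_component : witness_closed [set x | connect e v x].
Proof.
have [_ c_dom] := c_grundy.
split=> [| x | x i]; rewrite ?inE ?connect0 // => Cvx /c_dom[y exy cy].
by exists y; rewrite ?inE ?(connect_trans Cvx (connect1 exy)) ?up_blockW.
Qed.

Lemma witness_closed_drop S B x y :
  witness_closed S -> is_block e B -> max_two_connected e B -> x \in B -> y \in B ->
  x \in S -> y \in S -> c x = c y -> y != v -> connect (induced e (~: [set y])) v x ->
  exists2 S', witness_closed S' & #|S'| < #|S|.
Proof.
move=> [vS S_comp S_wit] bB B_max xB yB xS yS cxy yv Cvx.
set R := [set w | connect (induced e (~: [set y])) v w].
have vY : v \in ~: [set y] by rewrite !inE eq_sym.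
have yR : y \notin R.
  by rewrite inE; apply/negP => /connect_induced_in/(_ vY); rewrite !inE eqxx.
exists (S :&: R); last first.
  apply: proper_card; apply/properP; split; first exact: subsetIl.
  by exists y; rewrite // inE (negbTE yR) andbF.
split=> [| z /setIP[zS _] | z i /setIP[zS zR] lt_i]; first by rewrite !inE vS connect0.
  exact: S_comp.
have [w wS [Hzw cw]] := S_wit z i zS lt_i.
have Cvz : connect (induced e (~: [set y])) v z by rewrite inE in zR.
have zy : z != y by move: (connect_induced_in Cvz vY); rewrite !inE.
case: (eqVneq w y) Hzw cw => [-> Hzy cyi | wy Hzw cwi].
  exists x; first by rewrite !inE xS Cvx.
  split; last by rewrite cxy.
  apply: (up_block_replace e_sym bB B_max xB yB _ Hzy).
    by apply: connect_trans Cvx; rewrite (connect_induced_sym e_sym).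
  by apply: contraTneq lt_i => ->; rewrite cxy cyi ltnn andbF.
exists w; last by [].
by rewrite !inE wS (connect_trans Cvz (up_block_connect_setD1 e_sym Hzw zy wy)).
Qed.

Lemma witness_closed_step S x y :
  witness_closed S -> x \in S -> y \in S -> H x y -> 0 < c x -> c x = c y ->
  exists2 S', witness_closed S' & #|S'| < #|S|.
Proof.
move=> S_cl xS yS Hxy cx_gt0 cxy.
have xy : x != y by apply: contraTneq Hxy => ->; rewrite (up_block_irr e_irr).
case/(up_block_cases e_sym): Hxy => [exy | [B [bB B_max] [xB yB]]].
  by move: (c_grundy.1 _ _ exy cx_gt0); rewrite cxy eqxx.
have [_ S_comp _] := S_cl.
case: (connect_avoid_either xy (S_comp x xS)) => [[yv Cvx] | [xv Cvy]].
  exact: witness_closed_drop S_cl bB B_max xB yB xS yS cxy yv Cvx.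
exact: witness_closed_drop S_cl bB B_max yB xB yS xS (esym cxy) xv Cvy.
Qed.

Lemma exists_up_block_proper : exists S, witness_closed S /\ up_block_proper_on S.
Proof.
suff: forall n (S : {set T}), #|S| < n -> witness_closed S ->
    exists S, witness_closed S /\ up_block_proper_on S.
  by apply; [exact: ltnSn | exact: witness_closed_component].
elim=> // n IHn S S_lt S_cl.
case: (boolP [exists x in S, exists y in S, [&& H x y, 0 < c x & c x == c y]]).
  case/exists_inP=> x xS /exists_inP[y yS /and3P[Hxy cx_gt0 /eqP cxy]].
  have [S' S'_cl S'_lt] := witness_closed_step S_cl xS yS Hxy cx_gt0 cxy.
  exact: IHn S' (leq_trans S'_lt S_lt) S'_cl.
move=> no_clash; exists S; split=> // x y xS yS Hxy cx_gt0.
apply: contraNneq no_clash => cxy; apply/exists_inP; exists x => //.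
by apply/exists_inP; exists y; rewrite // Hxy cx_gt0 cxy eqxx.
Qed.

Lemma partial_grundy_up_block : exists f, partial_grundy (up_block e) f /\ f v = c v.
Proof.
have [S [[vS _ S_wit] S_proper]] := exists_up_block_proper.
exists (fun x => if x \in S then c x else 0); split; last by rewrite vS.
split=> [x y Hxy | x i].
  case: ifP => [xS | //] cx_gt0; case: ifP => [yS | _]; first exact: S_proper.
  by rewrite -lt0n.
case: ifP => [xS lt_i | _]; last by rewrite ltn0 andbF.
by have [y yS [Hxy cy]] := S_wit x i xS lt_i; exists y; rewrite ?yS.
Qed.

End Reduction.

Theorem proposition7 (T : finType) (e : rel T) (e_sym : symmetric e) (e_irr : irreflexive e) :
  grundy_number e <= grundy_number (up_block e).
Proof.
case: (posnP (grundy_number e)) => [-> // | Gamma_gt0].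
have [c [v [c_grundy cv]]] := grundy_number_partial Gamma_gt0.
have [f [f_grundy fv]] := partial_grundy_up_block v e_sym e_irr c_grundy.
rewrite -cv -fv.
exact: (partial_grundy_le_grundy_number (up_block_sym e_sym) (up_block_irr e_irr) v f_grundy).
Qed.
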